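(* Let $\mathcal{M}=\mathbb{R}^{d_{\mathbb E}}\times\mathbb{S}^{d_{\mathbb S}}\times\mathbb{H}^{d_{\mathbb H}}$ be a product space form with spherical curvature $C_{\mathbb S}>0$, hyperbolic curvature $C_{\mathbb H}<0$, and fixed positive weights $\alpha_{\mathbb E},\alpha_{\mathbb S},\alpha_{\mathbb H}$. Then the VC dimension of the class of linear classifiers on $\mathcal{M}$ (defined below) is at least $\dim(\mathcal{M})+1=d_{\mathbb E}+d_{\mathbb S}+d_{\mathbb H}+1$.
   Context: Space forms have dimension at least $2$. $\mathbb{S}^{d}=\{x\in\mathbb{R}^{d+1}:\langle x,x\rangle=C_{\mathbb S}^{-1}\}$ with $\langle\cdot,\cdot\rangle$ the dot product; $\mathbb{H}^{d}=\{x\in\mathbb{R}^{d+1}:[x,x]=C_{\mathbb H}^{-1},x_1>0\}$ with $[u,v]=u^\top Hv$, $H=\mathrm{diag}(-1,1,\dots,1)$. A point of $\mathcal{M}$ is written $x=(x_{\mathbb E},x_{\mathbb S},x_{\mathbb H})$. A linear classifier on $\mathcal{M}$ is a map $x\mapsto\mathrm{sgn}\big(\langle w_{\mathbb E},x_{\mathbb E}\rangle+\alpha_{\mathbb S}\,\mathrm{asin}(\langle w_{\mathbb S},x_{\mathbb S}\rangle)+\alpha_{\mathbb H}\,\mathrm{asinh}([w_{\mathbb H},x_{\mathbb H}])+b\big)$ with parameters $w_{\mathbb E}\in\mathbb{R}^{d_{\mathbb E}}$, $\|w_{\mathbb E}\|_2=\alpha_{\mathbb E}$, $w_{\mathbb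 S}\in\mathbb{R}^{d_{\mathbb S}+1}$, $\langle w_{\mathbb S},w_{\mathbb S}\rangle=C_{\mathbb S}$, $w_{\mathbb H}\in\mathbb{R}^{d_{\mathbb H}+1}$, $[w_{\mathbb H},w_{\mathbb H}]=-C_{\mathbb H}$, $b\in\mathbb{R}$. *)

From HB Require Import structures.
From mathcomp Require Import all_boot all_order all_algebra.
From mathcomp Require Import all_classical all_reals all_analysis.
Set Implicit Arguments. Unset Strict Implicit. Unset Printing Implicit Defensive.
Import Order.TTheory GRing.Theory Num.Theory.
Local Open Scope ring_scope.

Section ProductSpaceForms.
Variable R : realType.

Definition dotp (n : nat) (u v : 'rV[R]_n) : R := \sum_(i < n) u ord0 i * v ord0 i.

Definition minkp (n : nat) (u v : 'rV[R]_n.+1) : R :=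
  - (u ord0 ord0 * v ord0 ord0) + \sum_(i < n.+1 | i != ord0) u ord0 i * v ord0 i.

Definition asinh (x : R) : R := ln (x + Num.sqrt (x ^+ 2 + 1)).

Definition on_sphere (CS : R) (d : nat) (x : 'rV[R]_d.+1) : Prop :=
  dotp x x = CS^-1.

Definition on_hyperboloid (CH : R) (d : nat) (x : 'rV[R]_d.+1) : Prop :=
  minkp x x = CH^-1 /\ 0 < x ord0 ord0.

Definition Mpt (dE dS dH : nat) : Type :=
  ('rV[R]_dE * 'rV[R]_dS.+1 * 'rV[R]_dH.+1)%type.

Definition on_M (CS CH : R) (dE dS dH : nat) (x : Mpt dE dS dH) : Prop :=
  on_sphere CS x.1.2 /\ on_hyperboloid CH x.2.

Definition admissible_params (CS CH aE : R) (dE dS dH : nat)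
  (wE : 'rV[R]_dE) (wS : 'rV[R]_dS.+1) (wH : 'rV[R]_dH.+1) : Prop :=
  Num.sqrt (dotp wE wE) = aE /\ dotp wS wS = CS /\ minkp wH wH = - CH.

Definition lin_classifier (aS aH : R) (dE dS dH : nat)
  (wE : 'rV[R]_dE) (wS : 'rV[R]_dS.+1) (wH : 'rV[R]_dH.+1) (b : R)
  (x : Mpt dE dS dH) : R :=
  Num.sg (dotp wE x.1.1 + aS * asin (dotp wS x.1.2) + aH * asinh (minkp wH x.2) + b).

Definition lin_classifiers (CS CH aE aS aH : R) (dE dS dH : nat)
  : set (Mpt dE dS dH -> R) :=
  [set h | exists wE wS wH b,
     admissible_params CS CH aE wE wS wH /\ h = lin_classifier aS aH wE wS wH b].

End ProductSpaceForms.

Definition label (R : realType) (b : bool) : R := if b then 1 else -1.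

Definition shatters (R : realType) (X : Type) (C : set (X -> R)) (n : nat)
  (pts : 'I_n -> X) : Prop :=
  forall y : 'I_n -> bool, exists h, C h /\ forall i, h (pts i) = label R (y i).

Definition vc_dim_ge (R : realType) (X : Type) (D : set X) (C : set (X -> R))
  (n : nat) : Prop :=
  exists pts : 'I_n -> X, injective pts /\ (forall i, D (pts i)) /\ shatters C pts.

(* Each factor of M carries an anchored configuration of as many points as its
   dimension: an anchor a and points p_1, ..., p_n such that every sign pattern
   on the p_i is realized, with a uniform margin, by the feature of an admissible
   parameter that vanishes at a.  In R^n take a = 0 and the basis vectors; on the
   sphere the pole and the points on the other coordinate axes, with w orthogonal
   to the pole; on the hyperboloid the apex and the points lifted over the unit
   space vectors, with w of zero time component.  Since the score of a linear
   classifier is the sum of the three features plus b, configurations glue along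
   products by moving one coordinate at a time off the anchor, and the anchor of
   the product, whose label is carried by a bias smaller than the margin, is one
   more shattered point. *)

From HB Require Import structures.
From mathcomp Require Import all_boot all_order all_algebra.
From mathcomp Require Import all_classical all_reals all_analysis.
From mathcomp Require Import lra.
Import Order.TTheory GRing.Theory Num.Theory.
Local Open Scope ring_scope.
Local Open Scope classical_set_scope.

Section InverseTrigonometric.
Context {R : realType}.
Implicit Type x : R.

Lemma asin0 : asin (0 : R) = 0.
Proof. by rewrite -{1}sin0 sinK // in_itv/= oppr_le0 divr_ge0 ?pi_ge0. Qed.

Lemma asinN x : -1 <= x <= 1 -> asin (- x) = - asin x.
Proof.
move=> x_itv; have [/andP[x_ge x_le] sin_asin] := asin_def x_itv.
by rewrite -{1}sin_asin -sinN sinK // in_itv/= lerN2 x_le -lerN2 opprK x_ge.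
Qed.

Lemma asin_gt0 x : 0 < x <= 1 -> 0 < asin x.
Proof.
move=> /andP[x_gt0 x_le1].
have x_itv : -1 <= x <= 1 by rewrite x_le1 andbT (le_trans _ (ltW x_gt0)) // lerN10.
have [/andP[asin_ge asin_le] sin_asin] := asin_def x_itv.
rewrite ltNge; apply/negP => asin_le0.
have : 0 <= sin (- asin x).
  apply: sin_ge0_pi; rewrite oppr_ge0 asin_le0 /= lerNl (le_trans _ asin_ge) //.
  by rewrite lerN2 ler_pdivrMr // ler_peMr ?pi_ge0 ?ler1n.
by rewrite sinN sin_asin oppr_ge0 leNgt x_gt0.
Qed.

Lemma asinh0 : asinh (0 : R) = 0.
Proof. by rewrite /asinh expr0n /= !add0r sqrtr1 ln1. Qed.

Lemma asinhN x : asinh (- x) = - asinh x.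
Proof.
rewrite /asinh sqrrN; set s := Num.sqrt (x ^+ 2 + 1).
have s2 : s ^+ 2 = x ^+ 2 + 1 by rewrite sqr_sqrtr // addr_ge0 ?sqr_ge0.
have s_gt : `|x| < s by rewrite -ltr_sqr ?nnegrE ?sqrtr_ge0 // s2 real_normK ?num_real // ltrDl.
have pos : 0 < x + s by rewrite addrC -ltrBlDr sub0r (le_lt_trans _ s_gt) // -normrN ler_norm.
suff -> : - x + s = (x + s)^-1 by rewrite lnV // posrE.
apply: (@mulIf _ (x + s)); first by rewrite gt_eqF.
by rewrite mulVf ?gt_eqF // addrC [x + _]addrC -subr_sqr s2 addrAC subrr add0r.
Qed.

Lemma asinh_gt0 x : 0 < x -> 0 < asinh x.
Proof.
move=> x_gt0; apply: ln_gt0; rewrite -ltrBlDl (le_lt_trans (y := 1)) ?lerBlDr ?lerDl ?ltW //.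
by rewrite -{1}(sqrtr1 R) ltr_sqrt ?ltrDr ?exprn_gt0 ?addr_gt0 ?exprn_gt0.
Qed.

End InverseTrigonometric.

Section Shattering.
Context {R : realType}.

Lemma shatters_injective {X : Type} (C : set (X -> R)) n (pts : 'I_n -> X) :
  shatters C pts -> injective pts.
Proof.
move=> shC i j pts_ij; apply/eqP/negPn/negP => ij.
have [h [_ h_pts]] := shC (pred1 i).
move: (h_pts i); rewrite pts_ij h_pts /label /= eqxx eq_sym (negbTE ij).
lra.
Qed.

Lemma vc_dim_geS {X : Type} {D D' : set X} {C C' : set (X -> R)} {n} :
  vc_dim_ge D C n -> D `<=` D' -> C `<=` C' -> vc_dim_ge D' C' n.
Proof.
move=> [pts [pts_inj [D_pts shC]]] DD' CC'; exists pts; split=> //.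
split=> [i|y]; first exact/DD'/D_pts.
by have [h [Ch h_pts]] := shC y; exists h; split=> //; apply: CC'.
Qed.

Lemma label_sqr b : label R b * label R b = 1.
Proof. by case: b; rewrite /label ?mulr1 ?mulrNN ?mulr1. Qed.

Lemma sg_label b (x : R) : 0 < label R b * x -> Num.sg x = label R b.
Proof.
by case: b; rewrite /label ?mul1r ?mulN1r ?oppr_gt0 => x0; [exact: gtr0_sg | exact: ltr0_sg].
Qed.

Definition anchored_shattering {X W : Type} (D : set X) (adm : set W)
    (f : W -> X -> R) (n : nat) : Prop :=
  exists (a : X) (p : 'I_n -> X) (m : R),
    [/\ 0 < m, D a, forall i, D (p i) &
        forall s : 'I_n -> bool, exists2 w, adm w &
          f w a = 0 /\ forall i, m <= label R (s i) * f w (p i)].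

Lemma anchored_shattering_prod {X1 X2 W1 W2 : Type} {D1 : set X1} {D2 : set X2}
    {adm1 : set W1} {adm2 : set W2} {f1 : W1 -> X1 -> R} {f2 : W2 -> X2 -> R} {n1 n2} :
  anchored_shattering D1 adm1 f1 n1 -> anchored_shattering D2 adm2 f2 n2 ->
  anchored_shattering [set x | D1 x.1 /\ D2 x.2] [set w | adm1 w.1 /\ adm2 w.2]
    (fun w x => f1 w.1 x.1 + f2 w.2 x.2) (n1 + n2).
Proof.
move=> [a1 [p1 [m1 [m1_gt0 D1a1 D1p1 sh1]]]].
move=> [a2 [p2 [m2 [m2_gt0 D2a2 D2p2 sh2]]]].
pose p (k : 'I_(n1 + n2)) :=
  match fintype.split k with inl i => (p1 i, a2) | inr j => (a1, p2 j) end.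
exists (a1, a2), p, (Num.min m1 m2); split=> [|//|k|s].
- by rewrite lt_min m1_gt0.
- by rewrite /p; case: fintype.split => i /=; split.
have [w1 adm1w1 [f1a1 f1p1]] := sh1 (fun i => s (lshift n2 i)).
have [w2 adm2w2 [f2a2 f2p2]] := sh2 (fun j => s (rshift n1 j)).
exists (w1, w2) => //; split=> [|k]; first by rewrite /= f1a1 f2a2 addr0.
rewrite /p; case: split_ordP => [i|j] -> /=; rewrite ge_min.
  by rewrite f2a2 addr0 f1p1.
by rewrite f1a1 add0r f2p2 orbT.
Qed.

Lemma anchored_shattering_vc_dim {X W : Type} {D : set X} {adm : set W}
    {f : W -> X -> R} {n} :
  anchored_shattering D adm f n ->
  vc_dim_ge D [set h | exists w b, adm w /\ h = fun x => Num.sg (f w x + b)] (n + 1).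
Proof.
move=> [a [p [m [m_gt0 Da Dp shf]]]].
pose pts (k : 'I_(n + 1)) := match fintype.split k with inl i => p i | inr _ => a end.
have shC : shatters [set h | exists w b, adm w /\ h = fun x => Num.sg (f w x + b)] pts.
  move=> y; have [w admw [fa fp]] := shf (fun i => y (lshift 1 i)).
  pose b := label R (y (rshift n ord0)) * (m / 2).
  exists (fun x => Num.sg (f w x + b)); split; first by exists w, b.
  move=> k; apply: sg_label; rewrite /pts; case: split_ordP => [i|j] -> /=.
    move: (fp i); rewrite mulrDr /b mulrA.
    by case: (y (lshift 1 i)); case: (y (rshift n ord0));
      rewrite /label ?mul1r ?mulN1r ?mulNr ?opprK; lra.
  by rewrite fa add0r ord1 /b mulrA label_sqr mul1r divr_gt0.
exists pts; split; first exact: shatters_injective shC.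
by split=> // k; rewrite /pts; case: fintype.split.
Qed.

End Shattering.

Section Rows.
Context {R : realType}.

Definition row_cons {n} (a : R) (u : 'rV[R]_n) : 'rV[R]_n.+1 :=
  \row_(i < n.+1) oapp (u ord0) a (unlift ord0 i).

Definition sign_row {n} (s : 'I_n -> bool) : 'rV[R]_n := \row_i label R (s i).

Lemma row_cons0 n a (u : 'rV[R]_n) : row_cons a u ord0 ord0 = a.
Proof. by rewrite mxE unlift_none. Qed.

Lemma row_cons_lift n a (u : 'rV[R]_n) i : row_cons a u ord0 (lift ord0 i) = u ord0 i.
Proof. by rewrite mxE liftK. Qed.

Lemma dotp0r n (u : 'rV[R]_n) : dotp u 0 = 0.
Proof. by rewrite /dotp big1 // => i _; rewrite mxE mulr0. Qed.

Lemma dotpZl n c (u v : 'rV[R]_n) : dotp (c *: u) v = c * dotp u v.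
Proof. by rewrite /dotp mulr_sumr; apply: eq_bigr => i _; rewrite mxE mulrA. Qed.

Lemma dotpZr n c (u v : 'rV[R]_n) : dotp u (c *: v) = c * dotp u v.
Proof. by rewrite /dotp mulr_sumr; apply: eq_bigr => i _; rewrite mxE mulrCA. Qed.

Lemma dotp_delta n (u : 'rV[R]_n) i : dotp u (delta_mx ord0 i) = u ord0 i.
Proof.
rewrite /dotp (bigD1 i) //= big1 => [|j ji]; last by rewrite mxE (negbTE ji) andbF mulr0.
by rewrite mxE !eqxx mulr1 addr0.
Qed.

Lemma dotp_sign_row n (s : 'I_n -> bool) : dotp (sign_row s) (sign_row s) = n%:R.
Proof.
rewrite /dotp (eq_bigr (fun=> 1)) => [|i _]; first by rewrite sumr_const card_ord.
by rewrite !mxE label_sqr.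
Qed.

Lemma dotp_row_cons n a b (u v : 'rV[R]_n) :
  dotp (row_cons a u) (row_cons b v) = a * b + dotp u v.
Proof. by rewrite /dotp big_ord_recl !row_cons0; under eq_bigr do rewrite !row_cons_lift. Qed.

Lemma minkp_row_cons n a b (u v : 'rV[R]_n) :
  minkp (row_cons a u) (row_cons b v) = - (a * b) + dotp u v.
Proof.
rewrite /minkp big_mkcond big_ord_recl /= add0r !row_cons0.
by under eq_bigr do rewrite !row_cons_lift.
Qed.

End Rows.

Section SpaceForms.
Context {R : realType}.

Lemma label_mulK b (x : R) : label R b * (label R b * x) = x.
Proof. by rewrite mulrA label_sqr mul1r. Qed.

Lemma odd_label {g : R -> R} {x : R} :
  g (- x) = - g x -> forall b, g (label R b * x) = label R b * g x.
Proof. by move=> gN [|]; rewrite /label ?mul1r // !mulN1r. Qed.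

Lemma euclid_anchored_shattering n (a : R) : (0 < n)%N -> 0 < a ->
  anchored_shattering setT [set w : 'rV[R]_n | Num.sqrt (dotp w w) = a] (@dotp R n) n.
Proof.
move=> n_gt0 a_gt0; have sqrtn_gt0 : 0 < Num.sqrt n%:R :> R by rewrite sqrtr_gt0 ltr0n.
pose c := a / Num.sqrt n%:R.
exists 0, (fun i => delta_mx ord0 i), c; split => // [|s]; first by rewrite divr_gt0.
exists (c *: sign_row s); [|split => [|i]].
- rewrite /= dotpZl dotpZr dotp_sign_row mulrA -expr2 sqrtrM ?sqr_ge0 //.
  by rewrite sqrtr_sqr gtr0_norm ?divfK ?gt_eqF ?divr_gt0.
- by rewrite dotp0r.
- by rewrite dotpZl dotp_delta mxE mulrCA label_sqr mulr1.
Qed.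

Lemma sphere_anchored_shattering n (C a : R) : (0 < n)%N -> 0 < C -> 0 < a ->
  anchored_shattering (@on_sphere R C n) [set w | dotp w w = C]
    (fun w x => a * asin (dotp w x)) n.
Proof.
move=> n_gt0 C_gt0 a_gt0.
have sqrtn_gt0 : 0 < Num.sqrt n%:R :> R by rewrite sqrtr_gt0 ltr0n.
have sqrtC_gt0 : 0 < Num.sqrt C by rewrite sqrtr_gt0.
pose r := (Num.sqrt C)^-1; pose c := Num.sqrt C / Num.sqrt n%:R.
pose u := (Num.sqrt (n%:R : R))^-1.
have rr : r * r = C^-1 by rewrite -invfM -expr2 sqr_sqrtr ?ltW.
have cr : c * r = u by rewrite mulrAC divff ?gt_eqF ?mul1r.
have u_gt0 : 0 < u by rewrite invr_gt0.
have u_le1 : u <= 1 by rewrite invf_le1 // -{1}sqrtr1 ler_sqrt // ler1n.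
have u_itv : -1 <= u <= 1 by rewrite u_le1 andbT (le_trans _ (ltW u_gt0)) ?lerN10.
exists (row_cons r 0), (fun i => row_cons 0 (r *: delta_mx ord0 i)), (a * asin u).
split => [||i|s].
- by rewrite mulr_gt0 ?asin_gt0 ?u_gt0.
- by rewrite /on_sphere dotp_row_cons dotp0r addr0 rr.
- by rewrite /on_sphere dotp_row_cons mul0r add0r dotpZl dotpZr dotp_delta mxE !eqxx mulr1 rr.
exists (row_cons 0 (c *: sign_row s)); [|split => [|i]].
- rewrite /= dotp_row_cons mul0r add0r dotpZl dotpZr dotp_sign_row mulrA -expr2.
  by rewrite expr_div_n !sqr_sqrtr ?ler0n ?ltW // divfK // pnatr_eq0 -lt0n.
- by rewrite dotp_row_cons mul0r add0r dotp0r asin0 mulr0.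
rewrite dotp_row_cons mul0r add0r dotpZl dotpZr dotp_delta mxE [c * _]mulrA cr.
by rewrite [u * _]mulrC (odd_label (asinN _ u_itv)) mulrCA label_mulK.
Qed.

Lemma hyperboloid_anchored_shattering n (C a : R) : (0 < n)%N -> C < 0 -> 0 < a ->
  anchored_shattering (@on_hyperboloid R C n) [set w | minkp w w = - C]
    (fun w x => a * asinh (minkp w x)) n.
Proof.
move=> n_gt0 C_lt0 a_gt0.
have Cinv_lt0 : C^-1 < 0 by rewrite invr_lt0.
pose r := (Num.sqrt (- C))^-1; pose q := Num.sqrt (1 - C^-1).
pose c := Num.sqrt (- C / n%:R).
have c_gt0 : 0 < c by rewrite sqrtr_gt0 divr_gt0 ?oppr_gt0 ?ltr0n.
exists (row_cons r 0), (fun i => row_cons q (delta_mx ord0 i)), (a * asinh c).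
split => [||i|s].
- by rewrite mulr_gt0 ?asinh_gt0.
- split; last by rewrite row_cons0 invr_gt0 sqrtr_gt0 oppr_gt0.
  by rewrite minkp_row_cons dotp0r addr0 -invfM -expr2 sqr_sqrtr ?oppr_ge0 ?ltW // invrN opprK.
- split; last by rewrite row_cons0 sqrtr_gt0 subr_gt0 (lt_trans Cinv_lt0).
  rewrite minkp_row_cons -expr2 sqr_sqrtr ?subr_ge0 ?(le_trans (ltW Cinv_lt0)) //.
  by rewrite dotp_delta mxE !eqxx opprB subrK.
exists (row_cons 0 (c *: sign_row s)); [|split => [|i]].
- rewrite /= minkp_row_cons mul0r oppr0 add0r dotpZl dotpZr dotp_sign_row mulrA -expr2.
  by rewrite sqr_sqrtr ?divfK ?divr_ge0 ?oppr_ge0 ?ler0n ?ltW // pnatr_eq0 -lt0n.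
- by rewrite minkp_row_cons mul0r oppr0 add0r dotp0r asinh0 mulr0.
rewrite minkp_row_cons mul0r oppr0 add0r dotpZl dotp_delta mxE [c * _]mulrC.
by rewrite (odd_label (asinhN _)) mulrCA label_mulK.
Qed.

End SpaceForms.

Theorem theorem2 (R : realType) (dE dS dH : nat)
  (hdE : (2 <= dE)%N) (hdS : (2 <= dS)%N) (hdH : (2 <= dH)%N)
  (CS CH aE aS aH : R)
  (hCS : 0 < CS) (hCH : CH < 0) (haE : 0 < aE) (haS : 0 < aS) (haH : 0 < aH) :
  vc_dim_ge (@on_M R CS CH dE dS dH)
            (@lin_classifiers R CS CH aE aS aH dE dS dH)
            (dE + dS + dH + 1).
Proof.
have shM := anchored_shattering_prod
  (anchored_shattering_prod (euclid_anchored_shattering _ _ (ltnW hdE) haE)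
                            (sphere_anchored_shattering _ _ _ (ltnW hdS) hCS haS))
  (hyperboloid_anchored_shattering _ _ _ (ltnW hdH) hCH haH).
apply: (vc_dim_geS (anchored_shattering_vc_dim shM)).
  by move=> x [[_ xS] xH]; split.
move=> _ [[[wE wS] wH] [b [[[wE_adm wS_adm] wH_adm] ->]]].
by exists wE, wS, wH, b.
Qed.
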